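(* Let $m,n$ be positive integers and $P\in\Gamma^\pi_{m,n}$. If $m$ is even, then $P$ is an extreme point of $\Gamma^\pi_{m,n}$ if and only if the bipartite graph associated with $P$ is a forest and every row vertex has degree $1$. If $m=2k+1$ is odd, then $P$ is an extreme point of $\Gamma^\pi_{m,n}$ if and only if the bipartite graph associated with $P$ satisfies both: (i) it is a forest; (ii) the middle row vertex $r_{k+1}$ has degree $1$ or $2$, and every other row vertex has degree $1$.
   Context: A real $m\times n$ matrix is stochastic if its entries are nonnegative and each row sums to $1$. $A=(a_{i,j})$ is centrosymmetric if $a_{i,j}=a_{m+1-i,n+1-j}$ for all $i,j$. $\Gamma^\pi_{m,n}$ is the convex set of $m\times n$ centrosymmetric stochastic matrices. The bipartite graph associated with $A\in M_{m,n}$ has vertex classes $\{r_1,\dots,r_m\}$ (row vertices) and $\{s_1,\dots,s_n\}$ (column vertices), with an edge between $r_i$ and $s_j$ if and only if $a_{i,j}\neq 0$. *)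

From mathcomp Require Import all_boot all_order all_algebra.
From mathcomp Require Import reals.
Set Implicit Arguments. Unset Strict Implicit. Unset Printing Implicit Defensive.
Import Order.TTheory GRing.Theory Num.Theory.
Local Open Scope ring_scope.

Section Defs.
Variable R : realType.

Definition stochastic m n (A : 'M[R]_(m, n)) : Prop :=
  (forall i j, 0 <= A i j) /\ (forall i, \sum_(j < n) A i j = 1).

(* a_{i,j} = a_{m+1-i, n+1-j}  (0-based: rev_ord) *)
Definition centrosymmetric m n (A : 'M[R]_(m, n)) : Prop :=
  forall i j, A i j = A (rev_ord i) (rev_ord j).

Definition Gamma_pi m n (A : 'M[R]_(m, n)) : Prop :=
  stochastic A /\ centrosymmetric A.

Definition extreme_point m n (S : 'M[R]_(m, n) -> Prop) (P : 'M[R]_(m, n)) : Prop :=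
  S P /\ forall (A B : 'M[R]_(m, n)) (t : R), S A -> S B -> 0 < t < 1 ->
    P = t *: A + (1 - t) *: B -> A = P /\ B = P.

(* bipartite graph of A: vertices inl i = r_i (rows), inr j = s_j (columns) *)
Definition bigraph m n (A : 'M[R]_(m, n)) : rel ('I_m + 'I_n)%type :=
  fun u v => match u, v with
             | inl i, inr j => A i j != 0
             | inr j, inl i => A i j != 0
             | _, _ => false
             end.

Definition row_degree m n (A : 'M[R]_(m, n)) (i : 'I_m) : nat :=
  #|[set j : 'I_n | A i j != 0]|.
End Defs.

Definition forest (T : finType) (e : rel T) : Prop :=
  ~ exists p : seq T, [/\ uniq p, (3 <= size p)%N & cycle e p].

(* A row of P with two support columns j0, j1 can be perturbed by moving mass
   from one to the other and doing the mirrored move in the mirrored row; this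
   stays in Gamma_pi and fails to move P only when the row is the middle row
   and j1 is the mirror of j0.  So an extreme point has one support entry per
   row, except possibly two mirrored ones in the middle row.  Conversely such a
   support pattern determines every matrix of Gamma_pi supported inside it, so
   P is extreme.  The forest condition is then automatic: a cycle of the
   bipartite graph passes through two distinct rows of degree at least 2, but
   only the middle row can have degree 2. *)

From mathcomp Require Import all_boot all_order all_algebra.
From mathcomp Require Import reals.
From mathcomp Require Import lra zify.
Set Implicit Arguments. Unset Strict Implicit. Unset Printing Implicit Defensive.
Import Order.TTheory GRing.Theory Num.Theory.
Local Open Scope ring_scope.

Lemma rev_ord_fixed_uniq n (j j' : 'I_n) :
  rev_ord j = j -> rev_ord j' = j' -> j = j'.
Proof.
move=> /(congr1 val) /= hj /(congr1 val) /= hj'; apply/val_inj => /=.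
have := ltn_ord j; have := ltn_ord j'; lia.
Qed.

Lemma rev_ord_fixed_odd k (i : 'I_(2 * k + 1)) : (rev_ord i == i) = (val i == k).
Proof.
have lti := ltn_ord i; apply/eqP/eqP => [/(congr1 val) /= | hi]; first lia.
by apply/val_inj; move: hi => /= hi; lia.
Qed.

Lemma rev_ord_fixed_even n (i : 'I_n) : ~~ odd n -> rev_ord i != i.
Proof.
move=> even_n; apply/eqP => /(congr1 val) /= hi.
have en : n = (i + i).+1 by have := ltn_ord i; lia.
by move: even_n; rewrite en /= oddD addbb.
Qed.

Lemma card2_rev_closed n (A : {set 'I_n}) j j' :
  #|A| = 2%N -> {in A, forall x, rev_ord x \in A} -> j \in A -> j' \in A ->
  j' = j \/ j' = rev_ord j.
Proof.
move=> /eqP/cards2P [x [y [xy ->]]] Arev.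
have rev_xy : rev_ord x = y.
  have /Arev : x \in [set x; y] by rewrite !inE eqxx.
  rewrite !inE => /orP [/eqP rx | /eqP //].
  suff x_eq_y : x = y by rewrite x_eq_y eqxx in xy.
  have /Arev : y \in [set x; y] by rewrite !inE eqxx orbT.
  rewrite !inE => /orP [/eqP ry | /eqP ry].
    by apply: rev_ord_inj; rewrite rx ry.
  exact: rev_ord_fixed_uniq.
have rev_yx : rev_ord y = x by rewrite -rev_xy rev_ordK.
by rewrite !inE => /orP [] /eqP -> /orP [] /eqP ->; auto.
Qed.

Section UniqCycle.
Variables (T : eqType) (p : seq T).
Hypotheses (p_uniq : uniq p) (p_size : (2 < size p)%N).

Lemma next_next_neq x : x \in p -> next p (next p x) != x.
Proof.
case/rot_to=> i q rot_p; rewrite -!(next_rot i p_uniq) rot_p.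
have := p_uniq; rewrite -(rot_uniq i) rot_p.
have := p_size; rewrite -(size_rot i) rot_p.
case: q {rot_p} => [|y [|z r]] //= _; rewrite !inE !negb_or.
case/and4P=> /and3P [xy xz _] _ _ _; rewrite eqxx [y == x]eq_sym (negbTE xy) eqxx.
by rewrite eq_sym.
Qed.

Lemma prev_neq_next x : x \in p -> prev p x != next p x.
Proof.
move=> px; apply: contra (next_next_neq px) => /eqP <-.
by rewrite next_prev.
Qed.
End UniqCycle.

Lemma uniform_on_support (R : numFieldType) (T : finType) (f : T -> R) (S : {set T}) :
  \sum_x f x = 1 -> (forall x, x \notin S -> f x = 0) -> {in S &, forall x y, f x = f y} ->
  forall x, f x = (x \in S)%:R / #|S|%:R.
Proof.
move=> sum1 f0 fconst.
have [x0 Sx0] : exists x0, x0 \in S.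
  apply/set0Pn/eqP => S0; move: sum1; rewrite big1 => [/eqP|x _]; last by rewrite f0 // S0 inE.
  by rewrite eq_sym oner_eq0.
have fx0 : f x0 = #|S|%:R^-1.
  have S_gt0 : #|S|%:R != 0 :> R by rewrite pnatr_eq0 -lt0n; apply/card_gt0P; exists x0.
  have sumS : \sum_(x in S) f x = #|S|%:R * f x0.
    rewrite -sum1_card natr_sum mulr_suml.
    by apply: eq_bigr => x Sx; rewrite mul1r (fconst x x0).
  have : \sum_(x in S) f x = \sum_x f x.
    by rewrite [RHS](bigID (mem S)) /= [X in _ + X]big1 ?addr0 // => x /f0.
  by rewrite sum1 sumS => Sfx0; rewrite -[f x0](mulKf S_gt0) Sfx0 mulr1.
move=> x; case: (boolP (x \in S)) => Sx; last by rewrite f0 // mul0r.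
by rewrite mul1r (fconst x x0).
Qed.

Lemma convex_comb_eq0 (R : realDomainType) (t a b : R) :
  0 < t < 1 -> 0 <= a -> 0 <= b -> t * a + (1 - t) * b = 0 -> a = 0 /\ b = 0.
Proof. by move=> t01 a0 b0 ab0; split; nra. Qed.

Lemma sum_natr_andb_eq (R : pzSemiRingType) n (j : 'I_n) (c : bool) :
  \sum_b (c && (b == j))%:R = c%:R :> R.
Proof.
rewrite (bigD1 j) //= eqxx andbT big1 ?addr0 // => b /negbTE bj.
by rewrite bj andbF.
Qed.

Section CentroStochastic.
Variables (R : realType) (m n : nat).
Implicit Types (P X D : 'M[R]_(m, n)) (i a : 'I_m) (j b : 'I_n).

Definition row_support P i := [set j | P i j != 0].

Lemma row_degreeE P i : row_degree P i = #|row_support P i|.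
Proof. by []. Qed.

Definition admissible_row P i : Prop :=
  if rev_ord i == i then row_degree P i = 1%N \/ row_degree P i = 2%N
  else row_degree P i = 1%N.

Definition rot180 X := \matrix_(a, b) X (rev_ord a) (rev_ord b).

Lemma centrosymmetric_add_rot180 X : centrosymmetric (X + rot180 X).
Proof. by move=> a b; rewrite !mxE !rev_ordK addrC. Qed.

Lemma row_sum_rot180 X a : \sum_b rot180 X a b = \sum_b X (rev_ord a) b.
Proof.
rewrite (reindex_inj rev_ord_inj); apply: eq_bigr => b _.
by rewrite mxE rev_ordK.
Qed.

Lemma centro_fixed_row X i j :
  centrosymmetric X -> rev_ord i = i -> X i (rev_ord j) = X i j.
Proof. by move=> Xc ri; rewrite Xc rev_ordK ri. Qed.

Lemma row_degree_gt0 P i : stochastic P -> (0 < row_degree P i)%N.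
Proof.
case=> _ P1; rewrite row_degreeE card_gt0; apply/eqP => S0.
move: (P1 i); rewrite big1 => [/eqP | j _]; first by rewrite eq_sym oner_eq0.
apply/eqP; have : j \notin row_support P i by rewrite S0 inE.
by rewrite inE negbK.
Qed.

Lemma row_degree_gt1 P i j j' :
  j != j' -> P i j != 0 -> P i j' != 0 -> (1 < row_degree P i)%N.
Proof. by move=> jj' Pj Pj'; apply/card_gt1P; exists j, j'; rewrite !inE. Qed.

Lemma admissible_row_const P X i :
  centrosymmetric P -> centrosymmetric X -> admissible_row P i ->
  {in row_support P i &, forall j j', X i j = X i j'}.
Proof.
move=> Pc Xc; rewrite /admissible_row row_degreeE => adm j j' Sj Sj'.
have card1_eq : #|row_support P i| = 1%N -> X i j = X i j'.
  by move/eqP/cards1P=> [x Sx]; move: Sj Sj'; rewrite Sx !inE => /eqP -> /eqP ->.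
case: eqP adm => [ri [/card1_eq // | card2] | _ /card1_eq //].
have Srev : {in row_support P i, forall x, rev_ord x \in row_support P i}.
  by move=> x; rewrite !inE centro_fixed_row.
have [-> // | ->] := card2_rev_closed card2 Srev Sj Sj'.
by rewrite centro_fixed_row.
Qed.

Lemma Gamma_pi_support_eq P X :
  Gamma_pi P -> (forall i, admissible_row P i) -> Gamma_pi X ->
  (forall i j, P i j = 0 -> X i j = 0) -> X = P.
Proof.
move=> [[_ P1] Pc] adm [[_ X1] Xc] PX0; apply/matrixP => i j.
have off_support (Y : 'M[R]_(m, n)) : (forall j, P i j = 0 -> Y i j = 0) ->
    forall j, j \notin row_support P i -> Y i j = 0.
  by move=> Y0 k; rewrite inE negbK => /eqP /Y0.
rewrite (uniform_on_support (X1 i) (off_support X (PX0 i))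
           (admissible_row_const Pc Xc (adm i))).
rewrite (uniform_on_support (P1 i) (off_support P (fun _ => id))
           (admissible_row_const Pc Pc (adm i))) //.
Qed.

Lemma extreme_of_admissible P :
  Gamma_pi P -> (forall i, admissible_row P i) -> extreme_point (@Gamma_pi R m n) P.
Proof.
move=> GP adm; split=> // A B t GA GB t01 PAB.
have PE i j : P i j = t * A i j + (1 - t) * B i j.
  by rewrite PAB !mxE.
have AB0 i j : P i j = 0 -> A i j = 0 /\ B i j = 0.
  rewrite PE; apply: convex_comb_eq0 => //.
    by case: GA => [[]].
  by case: GB => [[]].
split; apply: Gamma_pi_support_eq => // i j /AB0 []//.
Qed.

Lemma extreme_perturbation P D :
  extreme_point (@Gamma_pi R m n) P -> centrosymmetric D ->
  (forall a, \sum_b D a b = 0) -> (forall a b, `|D a b| <= P a b) -> D = 0.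
Proof.
move=> [[[P0 P1] Pc] Pext] Dc D0 DP.
have GPD s : `|s| <= 1 -> Gamma_pi (P + s *: D).
  move=> s1; split; [split|] => [a b | a | a b]; rewrite ?mxE.
  - have : `|s * D a b| <= P a b.
      by rewrite normrM (le_trans _ (DP a b)) // ler_piMl.
    by rewrite ler_norml => /andP [sD _]; lra.
  - by under eq_bigr do rewrite !mxE; rewrite big_split /= -mulr_sumr D0 P1 mulr0 addr0.
  - by rewrite Pc Dc.
have [] := Pext _ _ (1 / 2) (GPD 1 _) (GPD (-1) _); rewrite ?normrN ?normr1 //.
- by apply/andP; split; lra.
- by apply/matrixP => a b; rewrite !mxE; lra.
by rewrite scale1r => /(canRL (addKr P)); rewrite addNr.
Qed.

Lemma extreme_row_support2 P i j0 j1 :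
  extreme_point (@Gamma_pi R m n) P -> j0 != j1 -> P i j0 != 0 -> P i j1 != 0 ->
  rev_ord i = i /\ rev_ord j0 = j1.
Proof.
move=> Pext j01 Pj0 Pj1; have [[[P0 _] Pc] _] := Pext.
have Pij0 : 0 < P i j0 by rewrite lt_def Pj0 P0.
have Pij1 : 0 < P i j1 by rewrite lt_def Pj1 P0.
pose eps := Num.min (P i j0) (P i j1) / 2.
have eps_gt0 : 0 < eps by rewrite divr_gt0 // lt_min Pij0 Pij1.
have eps_le0 : eps <= P i j0 / 2 by rewrite ler_pM2r ?invr_gt0 // ge_min lexx.
have eps_le1 : eps <= P i j1 / 2 by rewrite ler_pM2r ?invr_gt0 // ge_min lexx orbT.
clearbody eps.
pose E : 'M[R]_(m, n) := eps *: (delta_mx i j0 - delta_mx i j1).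
(* E + rot180 E vanishes at (i, j0) only if E (rev_ord i) (rev_ord j0) = - eps. *)
have E_sum a : \sum_b E a b = 0.
  under eq_bigr do rewrite !mxE.
  by rewrite -mulr_sumr big_split /= sumrN !sum_natr_andb_eq subrr mulr0.
have E_le a b : `|E a b| <= P a b / 2.
  rewrite !mxE; case: (eqVneq a i) => [-> | ai]; last first.
    by rewrite !andFb subrr mulr0 normr0 divr_ge0.
  case: (eqVneq b j0) => [-> | bj0]; first by rewrite (negbTE j01) subr0 mulr1 gtr0_norm.
  case: (eqVneq b j1) => [-> | bj1]; first by rewrite sub0r mulrN1 normrN gtr0_norm.
  by rewrite subrr mulr0 normr0 divr_ge0.
have D0 : E + rot180 E = 0.
  apply: extreme_perturbation Pext (centrosymmetric_add_rot180 E) _ _.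
  - move=> a; rewrite (eq_bigr _ (fun b _ => mxE _ _ _ _)) big_split /=.
    by rewrite row_sum_rot180 !E_sum addr0.
  - move=> a b; rewrite [(E + rot180 E) a b]mxE (le_trans (ler_normD _ _)) // [rot180 E a b]mxE.
    by rewrite [P a b]splitr lerD ?E_le // Pc E_le.
move/matrixP: D0 => /(_ i j0); rewrite !mxE !eqxx (negbTE j01) /=.
case: (boolP ((rev_ord i == i) && (rev_ord j0 == j1))) => [/andP [/eqP -> /eqP ->] // | _].
rewrite !subr0 mulr1 => /eqP; rewrite paddr_eq0 ?mulr_ge0 ?ler0n ?ltW //.
by rewrite (gt_eqF eps_gt0).
Qed.

Lemma admissible_of_extreme P i :
  extreme_point (@Gamma_pi R m n) P -> admissible_row P i.
Proof.
move=> Pext; have deg_gt0 := row_degree_gt0 i Pext.1.1.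
rewrite /admissible_row row_degreeE in deg_gt0 *.
case: eqP => [_ | not_ri].
- have deg_le2 : (#|row_support P i| <= 2)%N.
    rewrite leqNgt; apply/negP => /card_gt2P [x [y [z [[Sx Sy Sz] [xy yz zx]]]]].
    rewrite !inE in Sx Sy Sz; rewrite eq_sym in zx.
    have [_ rxy] := extreme_row_support2 Pext xy Sx Sy.
    have [_ rxz] := extreme_row_support2 Pext zx Sx Sz.
    by rewrite -rxy -rxz eqxx in yz.
  by case: #|_| deg_gt0 deg_le2 => [|[|[|]]] //; [left | right].
apply/eqP; rewrite eqn_leq deg_gt0 andbT leqNgt.
apply/negP => /card_gt1P [x [y [Sx Sy xy]]]; rewrite !inE in Sx Sy.
by have [/not_ri] := extreme_row_support2 Pext xy Sx Sy.
Qed.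

Lemma extreme_point_GammaP P :
  Gamma_pi P -> extreme_point (@Gamma_pi R m n) P <-> forall i, admissible_row P i.
Proof.
move=> GP; split=> [Pext i | ]; first exact: admissible_of_extreme.
exact: extreme_of_admissible.
Qed.

Lemma cycle_row_degree_gt1 P p i :
  uniq p -> (2 < size p)%N -> cycle (bigraph P) p -> inl i \in p ->
  (1 < row_degree P i)%N.
Proof.
move=> p_uniq p_size p_cycle ip.
have := prev_cycle p_cycle ip; have := next_cycle p_cycle ip.
have := prev_neq_next p_uniq p_size ip.
case: (prev p _) => [//|j]; case: (next p _) => [//|j'] /= jj' Pj' Pj.
exact: row_degree_gt1 jj' Pj Pj'.
Qed.

Lemma cycle_two_rows P p :
  uniq p -> (2 < size p)%N -> cycle (bigraph P) p ->
  exists i i', [/\ i != i', inl i \in p & inl i' \in p].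
Proof.
move=> p_uniq p_size p_cycle.
have [x px] : exists x, x \in p.
  by case: p p_uniq p_size p_cycle => [|x q] // *; exists x; rewrite inE eqxx.
have [i ip] : exists i, inl i \in p.
  case: x px => [i|j] px; first by exists i.
  have := next_cycle p_cycle px; rewrite -mem_next in px.
  by case: (next p _) px => [i|//] ip _; exists i.
have := next_next_neq p_uniq p_size ip; have := next_cycle p_cycle ip.
have := ip; rewrite -mem_next.
case: (next p _) => [//|j] jp _.
have := next_cycle p_cycle jp; rewrite -mem_next in jp.
case: (next p _) jp => [i'|//] i'p _ i'i; exists i, i'; split => //.
by rewrite eq_sym; apply: contra i'i => /eqP ->.
Qed.

Lemma forest_bigraph P :
  (forall i i', (1 < row_degree P i)%N -> (1 < row_degree P i')%N -> i = i') ->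
  forest (bigraph P).
Proof.
move=> deg_gt1_uniq [p [p_uniq p_size p_cycle]].
have [i [i' [ii' ip i'p]]] := cycle_two_rows p_uniq p_size p_cycle.
by move: ii'; rewrite (deg_gt1_uniq i i') ?eqxx //; apply: cycle_row_degree_gt1 p_cycle _.
Qed.

Lemma forest_of_admissible P : (forall i, admissible_row P i) -> forest (bigraph P).
Proof.
move=> adm; apply: forest_bigraph => i i'.
have fixed k : (1 < row_degree P k)%N -> rev_ord k = k.
  by have := adm k; rewrite /admissible_row; case: eqP => // _ ->.
by move=> /fixed ri /fixed ri'; apply: rev_ord_fixed_uniq.
Qed.

Lemma extreme_point_Gamma_forestP P :
  Gamma_pi P ->
  extreme_point (@Gamma_pi R m n) P <-> forest (bigraph P) /\ forall i, admissible_row P i.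
Proof.
move=> GP; rewrite extreme_point_GammaP //.
by split=> [adm | [] //]; split=> //; apply: forest_of_admissible.
Qed.

End CentroStochastic.

Theorem mainTheorem12 (R : realType) (m n : nat) (P : 'M[R]_(m, n)) :
  (0 < m)%N -> (0 < n)%N -> Gamma_pi P ->
  (~~ odd m ->
     (extreme_point (@Gamma_pi R m n) P <->
      forest (bigraph P) /\ (forall i : 'I_m, row_degree P i = 1%N))) /\
  (forall k : nat, m = (2 * k + 1)%N ->
     (extreme_point (@Gamma_pi R m n) P <->
      forest (bigraph P) /\
      (forall i : 'I_m,
         if val i == k then (row_degree P i = 1%N \/ row_degree P i = 2%N)
         else row_degree P i = 1%N))).
Proof.
move=> _ _ GP; have extP := extreme_point_Gamma_forestP GP.
split=> [even_m | k odd_m]; apply: (iff_trans extP).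
  split=> -[Pforest adm]; split=> // i; move: (adm i);
    by rewrite /admissible_row (negbTE (rev_ord_fixed_even i even_m)).
subst m; split=> -[Pforest adm]; split=> // i; move: (adm i);
  by rewrite /admissible_row rev_ord_fixed_odd.
Qed.
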